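(* Let $0<p_{\min}\le p_{\max}$ be vectors in $\mathbb{R}^n$, $\mathcal{D}_p=\{p:p_{\min}\le p\le p_{\max}\}$, and let $\mathcal{I}:\mathbb{R}^n_{\ge0}\to\mathbb{R}^n$ be differentiable and type-II standard with $\mathcal{I}(\mathcal{D}_p)\subseteq\mathcal{D}_p$. Let $f(x)=\ln\mathcal{I}(e^x)$ and define the matrix $B\in\mathbb{R}^{n\times n}$ by \[ B_{ij}=\max_{p\in\mathcal{D}_p}\Big|\frac{\partial\mathcal{I}_j(p)}{\partial p_i}\,\frac{p_i}{\mathcal{I}_j(p)}\Big|=\max_{x\in\ln\mathcal{D}_p}\Big|\frac{\partial f_j(x)}{\partial x_i}\Big|, \] and assume the spectral radius satisfies $\rho(B)<1$. Let $c\in\mathbb{R}^n$ with $c>0$, let $h:\mathbb{R}_{>0}\to\mathbb{R}^m$ be differentiable with each component strictly increasing (with positive derivative), and set \[ s=(I-B)^{-1}c,\qquad \kappa(p)=h\Big(\prod_{i=1}^n p_i^{s_i}\Big). \] Assume the problem $\min_{p\in\mathcal{D}_p}\kappa(p)$ s.t. $p\ge\mathcal{I}(p)$ is feasible. Then this problem is Fast-Lipschitz: the unique fixed point $p^\star=\mathcal{I}(p^\star)$ in $\mathcal{D}_p$ is its unique Pareto optimal solution.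
   Context: Inequalities are element-wise; $\ln,\exp$ act componentwise. $\mathcal{I}$ is type-II standard if for all $p,q\ge0$: $\mathcal{I}(p)>0$ (implied by two-sided scalability), (type-II monotonicity) $p\le q\Rightarrow\mathcal{I}(p)\ge\mathcal{I}(q)$, and (type-II scalability) for all $c>1$, $\mathcal{I}(cp)>(1/c)\mathcal{I}(p)$. For a vector objective, a feasible $p$ is Pareto optimal (minimization) if no feasible $q$ has $\kappa(q)\le\kappa(p)$, $\kappa(q)\neq\kappa(p)$. A problem is Fast-Lipschitz if its unique Pareto optimal solution is the unique solution of the fixed point equation of its constraint function. *)

(* classical reals. Vectors of R^n are functions nat -> R,
   only the coordinates 0..n-1 are meaningful; matrices are nat -> nat -> R. *)
From Stdlib Require Import Reals Lra.
Open Scope R_scope.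

Definition vec := nat -> R.
Definition mat := nat -> nat -> R.

Fixpoint rsum (n : nat) (f : nat -> R) : R :=
  match n with O => 0 | S n' => rsum n' f + f n' end.

Fixpoint rprod (n : nat) (f : nat -> R) : R :=
  match n with O => 1 | S n' => rprod n' f * f n' end.

Definition vle (n : nat) (p q : vec) : Prop := forall i, (i < n)%nat -> p i <= q i.
Definition vlt (n : nat) (p q : vec) : Prop := forall i, (i < n)%nat -> p i < q i.
Definition veq (n : nat) (p q : vec) : Prop := forall i, (i < n)%nat -> p i = q i.
Definition vconst (a : R) : vec := fun _ => a.
Definition vscale (c : R) (p : vec) : vec := fun i => c * p i.
Definition vexp (x : vec) : vec := fun i => exp (x i).
Definition vln (x : vec) : vec := fun i => ln (x i).

Definition ebasis (i : nat) : vec := fun k => if Nat.eqb k i then 1 else 0.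
Definition vaddt (p : vec) (t : R) (d : vec) : vec := fun k => p k + t * d k.

Definition type_II_standard (n : nat) (I : vec -> vec) : Prop :=
  (forall p, vle n (vconst 0) p -> vlt n (vconst 0) (I p)) /\
  (forall p q, vle n (vconst 0) p -> vle n (vconst 0) q ->
     vle n p q -> vle n (I q) (I p)) /\
  (forall p c, vle n (vconst 0) p -> 1 < c ->
     vlt n (vscale (1 / c) (I p)) (I (vscale c p))).

Definition frechet_diff_at (n : nat) (F : vec -> vec) (p : vec) : Prop :=
  exists J : mat, forall eps, 0 < eps -> exists delta, 0 < delta /\
    forall q, (forall k, (k < n)%nat -> Rabs (q k - p k) < delta) ->
      forall j, (j < n)%nat ->
        Rabs (F q j - F p j - rsum n (fun k => J j k * (q k - p k)))
          <= eps * rsum n (fun k => Rabs (q k - p k)).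

Definition partial_deriv (F : vec -> vec) (j i : nat) (p : vec) (l : R) : Prop :=
  derivable_pt_lim (fun t => F (vaddt p t (ebasis i)) j) 0 l.

Definition in_box (n : nat) (pmin pmax p : vec) : Prop := vle n pmin p /\ vle n p pmax.

(* a + i b is a complex eigenvector of B (nonzero) for eigenvalue al + i be *)
Definition complex_eigenvalue (n : nat) (B : mat) (al be : R) : Prop :=
  exists a b : vec, (exists i, (i < n)%nat /\ (a i <> 0 \/ b i <> 0)) /\
    (forall i, (i < n)%nat -> rsum n (fun j => B i j * a j) = al * a i - be * b i) /\
    (forall i, (i < n)%nat -> rsum n (fun j => B i j * b j) = be * a i + al * b i).

Definition spectral_radius_lt_1 (n : nat) (B : mat) : Prop :=
  forall al be, complex_eigenvalue n B al be -> al * al + be * be < 1.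

Definition feasible (n : nat) (pmin pmax : vec) (I : vec -> vec) (p : vec) : Prop :=
  in_box n pmin pmax p /\ vle n (I p) p.

Definition pareto_optimal (n m : nat) (pmin pmax : vec) (I : vec -> vec)
    (kappa : vec -> vec) (p : vec) : Prop :=
  feasible n pmin pmax I p /\
  ~ (exists q, feasible n pmin pmax I q /\ vle m (kappa q) (kappa p) /\
               ~ veq m (kappa q) (kappa p)).

(* The potential S(p) = sum_i s_i ln p_i, with s = (1 - B)^-1 c > 0, is strictly minimised
   over the feasible set exactly at the fixed point pstar of I.  In logarithmic coordinates I is
   B-Lipschitz: |ln I_j q - ln I_j p| <= sum_i B_ij |ln q_i - ln p_i|.  For feasible p put
   d = ln p - ln pstar; comparing p with max(p, pstar) and using monotonicity gives
   d_j >= - sum_i B_ij d_i^+, and weighting with s turns this into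
   sum_i s_i d_i >= sum_i c_i d_i^+, which is positive unless d = 0.  As kappa = h o exp o S
   with h strictly increasing, pstar dominates every other feasible point.
   The fixed point is squeezed between the alternating iterates started at pmin and pmax,
   whose log-gap is zero by the same weighted Lipschitz bound.  Positivity of s comes from
   following the solution of (1 - tB) x = c from t = 0 to t = 1: it cannot leave the
   positive orthant, since x >= 0 forces x = c + tBx >= c. *)

From Stdlib Require Import Reals Lra Lia Classical FunctionalExtensionality ClassicalEpsilon.
From mathcomp Require all_boot all_algebra Rstruct.
Open Scope R_scope.
Set Bullet Behavior "Strict Subproofs".

Lemma rsum_ext n f g : (forall i, (i < n)%nat -> f i = g i) -> rsum n f = rsum n g.
Proof.
  induction n as [|n IH]; intros H; simpl; [reflexivity|].
  rewrite IH by (intros; apply H; lia). now rewrite H by lia.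
Qed.

Lemma rsum_le n f g : (forall i, (i < n)%nat -> f i <= g i) -> rsum n f <= rsum n g.
Proof.
  induction n as [|n IH]; intros H; simpl; [lra|].
  assert (rsum n f <= rsum n g) by (apply IH; intros; apply H; lia).
  specialize (H n ltac:(lia)); lra.
Qed.

Lemma rsum_plus n f g : rsum n (fun i => f i + g i) = rsum n f + rsum n g.
Proof. induction n; simpl; [|rewrite IHn]; ring. Qed.

Lemma rsum_minus n f g : rsum n (fun i => f i - g i) = rsum n f - rsum n g.
Proof. induction n; simpl; [|rewrite IHn]; ring. Qed.

Lemma rsum_scal n a f : rsum n (fun i => a * f i) = a * rsum n f.
Proof. induction n; simpl; [|rewrite IHn]; ring. Qed.

Lemma rsum_0 n : rsum n (fun _ => 0) = 0.
Proof. induction n; simpl; [|rewrite IHn]; ring. Qed.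

Lemma rsum_nonneg n f : (forall i, (i < n)%nat -> 0 <= f i) -> 0 <= rsum n f.
Proof. intros H; rewrite <- (rsum_0 n); apply rsum_le; exact H. Qed.

Lemma rsum_eq0 n f : (forall i, (i < n)%nat -> 0 <= f i) -> rsum n f <= 0 ->
  forall i, (i < n)%nat -> f i = 0.
Proof.
  induction n as [|n IH]; intros Hf Hs i Hi; simpl in Hs; [lia|].
  assert (0 <= rsum n f) by (apply rsum_nonneg; intros; apply Hf; lia).
  assert (Hn := Hf n ltac:(lia)).
  destruct (Nat.eq_dec i n) as [->|]; [lra|].
  apply IH; [intros; apply Hf; lia|lra|lia].
Qed.

Lemma rsum_swap n m (F : nat -> nat -> R) :
  rsum n (fun j => rsum m (fun i => F i j)) = rsum m (fun i => rsum n (fun j => F i j)).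
Proof.
  induction n; simpl; [now rewrite rsum_0|].
  now rewrite IHn, <- rsum_plus.
Qed.

Lemma rsum_ebasis n i g : (i < n)%nat -> rsum n (fun k => g k * ebasis i k) = g i.
Proof.
  intros Hi. induction n as [|n IH]; [lia|simpl]. unfold ebasis at 2.
  destruct (Nat.eqb_spec n i) as [->|Hne].
  - rewrite (rsum_ext _ _ (fun _ => 0)), rsum_0; [ring|].
    intros k Hk. unfold ebasis. destruct (Nat.eqb_spec k i); [lia|ring].
  - rewrite IH by lia. ring.
Qed.

Lemma Un_cv_const x : Un_cv (fun _ => x) x.
Proof. intros eps Heps. exists O. intros. unfold R_dist. rewrite Rminus_diag, Rabs_R0. exact Heps. Qed.

Lemma Un_cv_rsum n (u : nat -> nat -> R) (l : nat -> R) :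
  (forall i, (i < n)%nat -> Un_cv (fun k => u k i) (l i)) ->
  Un_cv (fun k => rsum n (u k)) (rsum n l).
Proof.
  induction n as [|n IH]; intros H; simpl.
  - apply Un_cv_const.
  - apply CV_plus; [apply IH; intros; apply H|apply H]; lia.
Qed.

Definition nonsingular_on_01 (n : nat) (B : mat) : Prop :=
  forall t v, 0 <= t <= 1 ->
    (forall i, (i < n)%nat -> v i = t * rsum n (fun j => B i j * v j)) ->
    forall i, (i < n)%nat -> v i = 0.

Lemma spectral_radius_lt_1_nonsingular n B :
  spectral_radius_lt_1 n B -> nonsingular_on_01 n B.
Proof.
  intros Hrho t v Ht Hv i Hi. apply NNPP. intros Hvi.
  assert (Ht0 : t <> 0) by (intros ->; apply Hvi; rewrite Hv by exact Hi; ring).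
  assert (Hev : complex_eigenvalue n B (/ t) 0).
  { exists v, (fun _ => 0). split; [exists i; auto|split].
    - intros k Hk. rewrite (Hv k Hk) at 1. field. exact Ht0.
    - intros k Hk. rewrite (rsum_ext _ _ (fun _ => 0)) by (intros; ring).
      rewrite rsum_0. ring. }
  assert (1 <= / t) by (rewrite <- Rinv_1; apply Rinv_le_contravar; lra).
  specialize (Hrho _ _ Hev). nra.
Qed.

Module Cramer.
Import all_boot all_algebra Rstruct GRing.Theory.
Local Open Scope ring_scope.
Lemma rsum_big n (f : nat -> R) : rsum n f = \sum_(j < n) f j.
Proof. elim: n => [|n IH] /=; first by rewrite big_ord0. by rewrite big_ord_recr /= IH. Qed.

Lemma continuity_prod (I : finType) (F : I -> R -> R) (P : pred I) :
  (forall i, P i -> continuity (F i)) -> continuity (fun x => \prod_(i | P i) F i x).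
Proof.
move=> H; elim: (index_enum I) => [|a l IHl].
  by apply: (continuity_eq (f := fun _ => 1)) => [x|]; rewrite ?big_nil //; apply: continuity_const.
apply: (continuity_eq (f := fun x => if P a then F a x * \prod_(i <- l | P i) F i x
                                     else \prod_(i <- l | P i) F i x)) => [x|].
  by rewrite big_cons.
by case Pa: (P a) => //; apply: continuity_mult => //; apply: H.
Qed.

Lemma continuity_det k (F : R -> 'M[R]_k) :
  (forall a b, continuity (fun t => F t a b)) -> continuity (fun t => \det (F t)).
Proof.
move=> H; apply: continuity_sum => s _.
apply: continuity_mult; first exact: continuity_const.
by apply: continuity_prod => i _; apply: H.
Qed.

Section Resolvent.
Variables (n : nat) (B : mat).

Definition Bmx : 'M[R]_n := \matrix_(i, j) B i j.

Definition colfun (v : 'cV[R]_n) (i : nat) : R :=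
  if (insub i : option 'I_n) is Some k then v k ord0 else 0.

Lemma colfun_ord v (k : 'I_n) : colfun v k = v k ord0.
Proof. by rewrite /colfun valK. Qed.

Lemma rsum_colfun v (i : 'I_n) : rsum n (fun j => B i j * colfun v j) = (Bmx *m v) i ord0.
Proof. by rewrite rsum_big !mxE; apply: eq_bigr => j _; rewrite colfun_ord mxE. Qed.

Lemma colfun_resolvent v t (i : nat) : lt i n ->
  Rminus (colfun v i) (Rmult t (rsum n (fun j => Rmult (B i j) (colfun v j))))
  = colfun ((1%:M - t *: Bmx) *m v) i.
Proof.
move=> /ltP Hi; rewrite /colfun; case: insubP => [k _ <-|]; last by rewrite Hi.
by rewrite -/(colfun v) rsum_colfun mulmxBl mul1mx -scalemxAl !mxE.
Qed.

Lemma det_resolvent_neq0 t : nonsingular_on_01 n B -> Rle 0 t -> Rle t 1 ->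
  \det (1%:M - t *: Bmx) != 0.
Proof.
move=> Hns t0 t1; apply/eqP => Hdet.
have /det0P [v vn0 vM] : \det (1%:M - t *: Bmx)^T == 0 by rewrite det_tr Hdet.
have Mv : (1%:M - t *: Bmx) *m v^T = 0 by rewrite -[_ *m _]trmxK trmx_mul trmxK vM trmx0.
have v0 : forall i, lt i n -> colfun v^T i = 0.
  apply: (Hns t _ (conj t0 t1)) => i Hi.
  have := colfun_resolvent v^T t i Hi; rewrite Mv.
  have -> : colfun 0 i = R0 by rewrite /colfun; case: insub => // k; rewrite mxE.
  move=> E; lra.
move/negP: vn0; apply; apply/eqP/rowP => k.
have /ltP kn := ltn_ord k.
by have := v0 _ kn; rewrite colfun_ord !mxE.
Qed.

End Resolvent.

Local Close Scope ring_scope.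

(* [P] and [D] are the adjugate and the determinant in Cramer's rule for (1 - tB) x = c;
   the statement is in [R_scope], with Stdlib's [lt], so as to be usable outside. *)
Lemma cramer_path n (B : mat) (c : vec) : nonsingular_on_01 n B ->
  exists (P : nat -> R -> R) (D : R -> R),
    continuity D /\ D 0 = 1 /\ (forall i, continuity (P i)) /\
    (forall t, 0 <= t <= 1 -> D t <> 0) /\
    (forall t i, lt i n -> P i t - t * rsum n (fun j => B i j * P j t) = D t * c i).
Proof.
Local Open Scope ring_scope.
move=> Hns.
pose M t := 1%:M - t *: Bmx n B : 'M[R]_n.
pose cv := \col_(i < n) c i : 'cV[R]_n.
have Mcont a b : continuity (fun t => M t a b).
  apply: (continuity_eq (f := fun t => (a == b)%:R - t * B a b)) => [t|]; first by rewrite !mxE.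
  apply: continuity_minus; first exact: continuity_const.
  by apply: continuity_mult; [apply: derivable_continuous; apply: derivable_id|apply: continuity_const].
exists (fun i t => colfun n (\adj (M t) *m cv) i), (fun t => \det (M t)).
split; [|split; [|split; [|split]]].
- exact: continuity_det.
- by rewrite /M scale0r subr0 det1.
- move=> i; rewrite /colfun; case: insub => [k|]; last exact: continuity_const.
  apply: (continuity_eq (f := fun t => \sum_j \adj (M t) k j * cv j ord0)) => [t|].
    by rewrite !mxE.
  apply: continuity_sum => j _; apply: continuity_mult; last exact: continuity_const.
  apply: (continuity_eq (f := fun t => (-1) ^+ (j + k) * \det (row' j (col' k (M t))))) => [t|].
    by rewrite !mxE.
  apply: continuity_mult; first exact: continuity_const.
  apply: continuity_det => a b.
  by apply: (continuity_eq (f := fun t => M t (lift j a) (lift k b))) => [t|]; rewrite ?mxE.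
- by move=> t [t0 t1]; apply/eqP/det_resolvent_neq0.
- move=> t i Hi; rewrite colfun_resolvent // mulmxA mul_mx_adj mul_scalar_mx.
  move: Hi => /ltP Hi; rewrite /colfun; case: insubP => [k _ <-|]; last by rewrite Hi.
  by rewrite !mxE.
Qed.

End Cramer.

Lemma continuity_Rmin f g :
  continuity f -> continuity g -> continuity (fun t => Rmin (f t) (g t)).
Proof.
  intros Hf Hg.
  replace (fun t => Rmin (f t) (g t)) with (fun t => (f t + g t - Rabs (f t - g t)) * / 2).
  - intros t. apply (continuity_pt_mult (fun t => f t + g t - Rabs (f t - g t)) (fun _ => / 2)).
    + apply continuity_pt_minus; [now apply continuity_pt_plus|].
      apply (continuity_pt_comp (fun t => f t - g t) Rabs);
        [now apply continuity_pt_minus|apply Rcontinuity_abs].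
    + apply continuity_pt_const. intros ? ?; reflexivity.
  - apply functional_extensionality. intros t. unfold Rmin. destruct (Rle_dec (f t) (g t)).
    + rewrite Rabs_left1 by lra. field.
    + rewrite Rabs_right by lra. field.
Qed.

(* [min_upto k f = min (1, f 0, ..., f (k-1))]; the cap 1 only serves as a positive
   value for [k = 0]. *)
Fixpoint min_upto (k : nat) (f : nat -> R) : R :=
  match k with O => 1 | S k' => Rmin (min_upto k' f) (f k') end.

Lemma min_upto_le k f i : (i < k)%nat -> min_upto k f <= f i.
Proof.
  induction k as [|k IH]; simpl; intros H; [lia|].
  destruct (Nat.eq_dec i k) as [->|]; [apply Rmin_r|].
  eapply Rle_trans; [apply Rmin_l|apply IH; lia].
Qed.

Lemma min_upto_gt k f a : a < 1 -> (forall i, (i < k)%nat -> a < f i) -> a < min_upto k f.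
Proof.
  induction k as [|k IH]; simpl; intros H1 H; [exact H1|].
  apply Rmin_glb_lt; [apply IH|apply H]; auto.
Qed.

Lemma continuity_min_upto k (F : nat -> R -> R) :
  (forall i, (i < k)%nat -> continuity (F i)) -> continuity (fun t => min_upto k (fun i => F i t)).
Proof.
  induction k as [|k IH]; simpl; intros H.
  - apply continuity_const. intros ? ?; reflexivity.
  - apply (continuity_Rmin (fun t => min_upto k (fun i => F i t))); [apply IH|apply H]; auto.
Qed.

Lemma continuity_pos_01 f : continuity f -> 0 < f 0 ->
  (forall t, 0 <= t <= 1 -> f t <> 0) -> forall t, 0 <= t <= 1 -> 0 < f t.
Proof.
  intros Hf H0 Hne t Ht. apply Rnot_le_lt. intros Hle.
  destruct (IVT_cor f 0 t Hf (proj1 Ht) ltac:(nra)) as [z [Hz Hfz]].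
  apply (Hne z); [lra|exact Hfz].
Qed.

Lemma resolvent_path_pos n (B : mat) (c : vec) (P : nat -> R -> R) (D : R -> R) :
  (forall i j, (i < n)%nat -> (j < n)%nat -> 0 <= B i j) -> vlt n (vconst 0) c ->
  (forall i, continuity (P i)) -> (forall t, 0 <= t <= 1 -> 0 < D t) ->
  (forall t i, (i < n)%nat -> P i t - t * rsum n (fun j => B i j * P j t) = D t * c i) ->
  forall i, (i < n)%nat -> 0 < P i 1.
Proof.
  intros HB Hc HPc HDpos HP.
  assert (HPpos : forall t, 0 <= t <= 1 -> (forall i, (i < n)%nat -> 0 <= P i t) ->
                  forall i, (i < n)%nat -> 0 < P i t).
  { intros t Ht HP0 i Hi.
    assert (0 <= t * rsum n (fun j => B i j * P j t)).
    { apply Rmult_le_pos; [lra|]. apply rsum_nonneg. intros j Hj. apply Rmult_le_pos; auto. }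
    assert (0 < D t * c i) by (apply Rmult_lt_0_compat; [apply HDpos|apply Hc]; auto).
    specialize (HP t i Hi). lra. }
  set (g t := min_upto n (fun i => P i t)).
  assert (Hg : forall t, 0 <= t <= 1 -> 0 < g t).
  { apply continuity_pos_01.
    - apply continuity_min_upto. auto.
    - apply min_upto_gt; [lra|]. apply HPpos; [lra|]. intros i Hi. specialize (HP 0 i Hi).
      assert (0 < D 0) by (apply HDpos; lra). assert (Hci := Hc i Hi). unfold vconst in Hci.
      rewrite Rmult_0_l in HP. nra.
    - intros t Ht Hgt. assert (0 < g t); [|lra].
      apply min_upto_gt; [lra|]. apply HPpos; auto.
      intros i Hi. rewrite <- Hgt. apply (min_upto_le n (fun i => P i t)); exact Hi. }
  intros i Hi. eapply Rlt_le_trans; [apply (Hg 1); lra|].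
  apply (min_upto_le n (fun i => P i 1)), Hi.
Qed.

Lemma nonneg_resolvent_pos n (B : mat) (c s : vec) :
  nonsingular_on_01 n B ->
  (forall i j, (i < n)%nat -> (j < n)%nat -> 0 <= B i j) ->
  vlt n (vconst 0) c ->
  (forall i, (i < n)%nat -> s i - rsum n (fun j => B i j * s j) = c i) ->
  vlt n (vconst 0) s.
Proof.
  intros Hns HB Hc Hs.
  destruct (Cramer.cramer_path n B c Hns) as (P & D & HDc & HD0 & HPc & HDne & HP).
  assert (HDpos : forall t, 0 <= t <= 1 -> 0 < D t).
  { apply continuity_pos_01; [exact HDc| |exact HDne]. rewrite HD0. lra. }
  assert (HP1 := resolvent_path_pos n B c P D HB Hc HPc HDpos HP).
  assert (HD1 : 0 < D 1) by (apply HDpos; lra).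
  assert (Hs1 : forall i, (i < n)%nat -> s i - P i 1 / D 1 = 0).
  { apply (Hns 1); [lra|]. intros i Hi.
    rewrite (rsum_ext n _ (fun j => B i j * s j - / D 1 * (B i j * P j 1)))
      by (intros; unfold Rdiv; ring).
    rewrite rsum_minus, rsum_scal.
    specialize (HP 1 i Hi). specialize (Hs i Hi).
    replace (rsum n (fun j => B i j * P j 1)) with (P i 1 - D 1 * c i) by lra.
    replace (rsum n (fun j => B i j * s j)) with (s i - c i) by lra.
    field. lra. }
  intros i Hi. unfold vconst.
  assert (0 < P i 1 / D 1) by (apply Rdiv_lt_0_compat; [apply HP1, Hi|exact HD1]).
  specialize (Hs1 i Hi). lra.
Qed.

Section Weights.
Variables (n : nat) (B : mat) (c s : vec).
Hypothesis HBnn : forall i j, (i < n)%nat -> (j < n)%nat -> 0 <= B i j.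
Hypothesis Hc : vlt n (vconst 0) c.
Hypothesis Hs : forall i, (i < n)%nat -> s i - rsum n (fun j => B i j * s j) = c i.
Hypothesis Hsp : vlt n (vconst 0) s.

Lemma rsum_weighted_colsum (w : vec) :
  rsum n (fun j => s j * rsum n (fun i => B i j * w i)) = rsum n (fun i => w i * (s i - c i)).
Proof.
  rewrite (rsum_ext n _ (fun j => rsum n (fun i => B i j * w i * s j)))
    by (intros; rewrite <- rsum_scal; apply rsum_ext; intros; ring).
  rewrite rsum_swap. apply rsum_ext. intros i Hi.
  replace (s i - c i) with (rsum n (fun j => B i j * s j)) by (rewrite <- (Hs i Hi); ring).
  rewrite <- rsum_scal. apply rsum_ext. intros; ring.
Qed.

Lemma rsum_weighted_pospart_le (d : vec) :
  (forall j, (j < n)%nat -> - rsum n (fun i => B i j * Rmax 0 (d i)) <= d j) ->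
  rsum n (fun i => c i * Rmax 0 (d i)) <= rsum n (fun i => s i * d i).
Proof.
  intros Hd.
  apply Rle_trans with
    (rsum n (fun j => s j * Rmax 0 (d j) - s j * rsum n (fun i => B i j * Rmax 0 (d i)))).
  - rewrite rsum_minus, rsum_weighted_colsum, <- rsum_minus.
    apply Req_le, rsum_ext. intros; ring.
  - apply rsum_le. intros j Hj.
    assert (0 <= rsum n (fun i => B i j * Rmax 0 (d i))).
    { apply rsum_nonneg. intros i Hi. apply Rmult_le_pos; [apply HBnn; assumption|apply Rmax_l]. }
    specialize (Hd j Hj). specialize (Hsp j Hj). unfold vconst in Hsp.
    destruct (Rle_dec 0 (d j)); [rewrite Rmax_right|rewrite Rmax_left]; nra.
Qed.

Lemma subinvariant_eq0 (d : vec) : (forall i, (i < n)%nat -> 0 <= d i) ->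
  (forall j, (j < n)%nat -> d j <= rsum n (fun i => B i j * d i)) ->
  forall i, (i < n)%nat -> d i = 0.
Proof.
  intros Hd0 Hd.
  assert (Hcd : rsum n (fun i => c i * d i) <= 0).
  { assert (rsum n (fun j => s j * d j) <= rsum n (fun j => s j * rsum n (fun i => B i j * d i))).
    { apply rsum_le. intros j Hj. apply Rmult_le_compat_l; [apply Rlt_le, Hsp|apply Hd]; exact Hj. }
    rewrite rsum_weighted_colsum in H.
    replace (rsum n (fun i => c i * d i))
      with (rsum n (fun j => s j * d j) - rsum n (fun i => d i * (s i - c i)))
      by (rewrite <- rsum_minus; apply rsum_ext; intros; ring).
    lra. }
  intros i Hi.
  assert (Hci := Hc i Hi). unfold vconst in Hci.
  assert (Hz := rsum_eq0 n (fun i => c i * d i)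
                  ltac:(intros k Hk; apply Rmult_le_pos; [apply Rlt_le, Hc|apply Hd0]; exact Hk)
                  Hcd i Hi).
  destruct (Rmult_integral _ _ Hz); [lra|assumption].
Qed.

End Weights.

Lemma Rabs_le_inv x a : Rabs x <= a -> - a <= x <= a.
Proof.
  intros H. assert (Hx := Rle_abs x). assert (Hx' := Rle_abs (- x)). rewrite Rabs_Ropp in Hx'. lra.
Qed.

Lemma ln_le x y : 0 < x -> x <= y -> ln x <= ln y.
Proof. intros Hx [Hlt|<-]; [apply Rlt_le, ln_increasing; assumption|apply Rle_refl]. Qed.

Lemma exp_le x y : x <= y -> exp x <= exp y.
Proof. intros [Hlt|<-]; [apply Rlt_le, exp_increasing, Hlt|apply Rle_refl]. Qed.

Lemma ln_Rmax_minus a b : 0 < a -> 0 < b -> ln (Rmax a b) - ln b = Rmax 0 (ln a - ln b).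
Proof.
  intros Ha Hb. unfold Rmax at 1. destruct (Rle_dec a b) as [Hab|Hab].
  - rewrite Rmax_left; [ring|]. assert (ln a <= ln b) by (apply ln_le; assumption). lra.
  - rewrite Rmax_right; [reflexivity|]. assert (ln b < ln a) by (apply ln_increasing; lra). lra.
Qed.

Definition slog (n : nat) (s p : vec) : R := rsum n (fun i => s i * ln (p i)).

Lemma rprod_Rpower n (s p : vec) : (forall i, (i < n)%nat -> 0 < p i) ->
  rprod n (fun i => Rpower (p i) (s i)) = exp (slog n s p).
Proof.
  unfold slog. induction n as [|n IH]; intros Hp; simpl; [now rewrite exp_0|].
  rewrite IH by (intros; apply Hp; lia). unfold Rpower. now rewrite exp_plus.
Qed.

Lemma frechet_partial_deriv n F p i j : frechet_diff_at n F p -> (i < n)%nat -> (j < n)%nat ->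
  exists l, partial_deriv F j i p l.
Proof.
  intros [J HJ] Hi Hj. exists (J j i). intros eps Heps.
  destruct (HJ (eps / 2) ltac:(lra)) as [d [Hd Hb]].
  exists (mkposreal d Hd). intros t Ht0 Ht. simpl in Ht.
  assert (Hstep : forall k, vaddt p t (ebasis i) k - p k = t * ebasis i k)
    by (intros k; unfold vaddt; ring).
  assert (Habs : forall k, Rabs (vaddt p t (ebasis i) k - p k) = Rabs t * ebasis i k).
  { intros k. rewrite Hstep, Rabs_mult. unfold ebasis.
    destruct (Nat.eqb k i); [rewrite Rabs_R1|rewrite Rabs_R0]; ring. }
  assert (Hnear : forall k, (k < n)%nat -> Rabs (vaddt p t (ebasis i) k - p k) < d).
  { intros k Hk. rewrite Habs. unfold ebasis. destruct (Nat.eqb k i); lra. }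
  specialize (Hb _ Hnear j Hj).
  rewrite (rsum_ext n _ (fun k => t * J j k * ebasis i k)) in Hb by (intros; rewrite Hstep; ring).
  rewrite (rsum_ext n (fun k => Rabs (vaddt p t (ebasis i) k - p k)) (fun k => Rabs t * ebasis i k))
    in Hb by (intros; apply Habs).
  rewrite !rsum_ebasis in Hb by exact Hi.
  replace (vaddt p (0 + t) (ebasis i)) with (vaddt p t (ebasis i)) by (now rewrite Rplus_0_l).
  replace (vaddt p 0 (ebasis i)) with p
    by (apply functional_extensionality; intros k; unfold vaddt; ring).
  set (a := F (vaddt p t (ebasis i)) j - F p j) in *.
  assert (0 < Rabs t) by (apply Rabs_pos_lt; exact Ht0).
  replace (a / t - J j i) with ((a - t * J j i) / t) by (field; exact Ht0).
  unfold Rdiv. rewrite Rabs_mult, Rabs_inv.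
  apply (Rmult_lt_reg_r (Rabs t)); [lra|]. rewrite Rmult_assoc, Rinv_l by lra. nra.
Qed.

Lemma abs_diff_le_of_deriv_bound f K a b : a <= b ->
  (forall x, a <= x <= b -> exists d, derivable_pt_lim f x d /\ Rabs d <= K) ->
  Rabs (f b - f a) <= K * (b - a).
Proof.
  intros Hab Hd. destruct (Req_dec a b) as [<-|Hne].
  { rewrite !Rminus_diag, Rabs_R0. lra. }
  set (f' x := epsilon (inhabits 0) (fun d => derivable_pt_lim f x d /\ Rabs d <= K)).
  assert (Hf' : forall x, a <= x <= b -> derivable_pt_lim f x (f' x) /\ Rabs (f' x) <= K)
    by (intros x Hx; apply epsilon_spec, Hd, Hx).
  destruct (MVT_cor2 f f' a b ltac:(lra) (fun x Hx => proj1 (Hf' x Hx))) as [x [E Hx]].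
  rewrite E, Rabs_mult, (Rabs_right (b - a)) by lra.
  apply Rmult_le_compat_r; [lra|]. apply Hf'; lra.
Qed.

Definition upd (r : vec) (k : nat) (y : R) : vec := fun i => if Nat.eqb i k then y else r i.

Lemma upd_eq r k y : upd r k y k = y.
Proof. unfold upd. now rewrite Nat.eqb_refl. Qed.

Lemma partial_deriv_upd F j k r y l : partial_deriv F j k (upd r k y) l ->
  derivable_pt_lim (fun z => F (upd r k z) j) y l.
Proof.
  intros Hl eps Heps. destruct (Hl eps Heps) as [d Hd]. exists d. intros t Ht0 Ht.
  specialize (Hd t Ht0 Ht).
  assert (E : forall t, vaddt (upd r k y) t (ebasis k) = upd r k (y + t)).
  { intros t'. apply functional_extensionality. intros i. unfold vaddt, upd, ebasis.
    destruct (Nat.eqb i k); ring. }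
  rewrite !E, Rplus_0_l, Rplus_0_r in Hd. exact Hd.
Qed.

Section Box.
Variables (n : nat) (pmin pmax : vec) (I : vec -> vec).
Hypothesis Hpmin : vlt n (vconst 0) pmin.
Hypothesis HI : type_II_standard n I.

Lemma box_pos p : in_box n pmin pmax p -> vlt n (vconst 0) p.
Proof. intros [Hlo _] i Hi. specialize (Hpmin i Hi). specialize (Hlo i Hi). unfold vconst in *. lra. Qed.

Lemma box_nonneg p : in_box n pmin pmax p -> vle n (vconst 0) p.
Proof. intros Hp i Hi. apply Rlt_le, box_pos; assumption. Qed.

Lemma I_pos p j : in_box n pmin pmax p -> (j < n)%nat -> 0 < I p j.
Proof. intros Hp Hj. apply (proj1 HI p (box_nonneg p Hp) j Hj). Qed.

Lemma I_antitone p q : in_box n pmin pmax p -> in_box n pmin pmax q ->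
  vle n p q -> vle n (I q) (I p).
Proof. intros Hp Hq. apply (proj1 (proj2 HI)); apply box_nonneg; assumption. Qed.

Lemma I_congr p q : in_box n pmin pmax p -> in_box n pmin pmax q ->
  veq n p q -> veq n (I p) (I q).
Proof.
  intros Hp Hq Hpq j Hj.
  assert (H1 := I_antitone p q Hp Hq ltac:(intros i Hi; rewrite (Hpq i Hi); lra) j Hj).
  assert (H2 := I_antitone q p Hq Hp ltac:(intros i Hi; rewrite (Hpq i Hi); lra) j Hj).
  lra.
Qed.

Lemma upd_in_box r k y : in_box n pmin pmax r -> pmin k <= y <= pmax k ->
  in_box n pmin pmax (upd r k y).
Proof.
  intros [Hlo Hhi] Hy. split; intros i Hi; unfold upd;
    destruct (Nat.eqb_spec i k) as [->|]; try lra; auto.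
Qed.

Variable B : mat.
Hypothesis Hdiff : forall p, vlt n (vconst 0) p -> frechet_diff_at n I p.
Hypothesis HBub : forall i j, (i < n)%nat -> (j < n)%nat ->
  forall p l, in_box n pmin pmax p -> partial_deriv I j i p l -> Rabs (l * p i / I p j) <= B i j.

(* The chain rule turns the bound on the elasticities [dI_j/dp_k * p_k / I_j] into a
   bound on the derivative of [u |-> ln I_j(..., exp u, ...)]. *)
Lemma ln_I_coord_lipschitz r k j y1 y2 : (k < n)%nat -> (j < n)%nat ->
  in_box n pmin pmax r -> pmin k <= y1 <= pmax k -> pmin k <= y2 <= pmax k ->
  Rabs (ln (I (upd r k y1) j) - ln (I (upd r k y2) j)) <= B k j * Rabs (ln y1 - ln y2).
Proof.
  intros Hk Hj Hr Hy1 Hy2.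
  set (phi u := ln (I (upd r k (exp u)) j)).
  assert (Hphi : forall a b, a <= b -> pmin k <= exp a -> exp b <= pmax k ->
                   Rabs (phi b - phi a) <= B k j * (b - a)).
  { intros a b Hab Ha Hb. apply abs_diff_le_of_deriv_bound; [exact Hab|].
    intros u Hu.
    assert (Hexp : pmin k <= exp u <= pmax k).
    { split; [eapply Rle_trans; [exact Ha|]|eapply Rle_trans; [|exact Hb]];
        destruct (Req_dec a u) as [->|]; destruct (Req_dec u b) as [->|];
        try lra; apply Rlt_le, exp_increasing; lra. }
    assert (Hbox := upd_in_box r k (exp u) Hr Hexp).
    destruct (frechet_partial_deriv n I _ k j (Hdiff _ (box_pos _ Hbox)) Hk Hj) as [l Hl].
    assert (HIp := I_pos _ j Hbox Hj).
    exists (/ I (upd r k (exp u)) j * (l * exp u)). split.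
    - apply (derivable_pt_lim_comp (fun u => I (upd r k (exp u)) j) ln).
      + apply (derivable_pt_lim_comp exp (fun z => I (upd r k z) j));
          [apply derivable_pt_lim_exp|apply partial_deriv_upd, Hl].
      + apply derivable_pt_lim_ln, HIp.
    - assert (HB := HBub k j Hk Hj _ l Hbox Hl). rewrite upd_eq in HB.
      unfold Rdiv in HB. rewrite Rmult_comm. exact HB. }
  assert (Hpk := Hpmin k Hk). unfold vconst in Hpk.
  replace (ln (I (upd r k y1) j)) with (phi (ln y1)) by (unfold phi; rewrite exp_ln by lra; reflexivity).
  replace (ln (I (upd r k y2) j)) with (phi (ln y2)) by (unfold phi; rewrite exp_ln by lra; reflexivity).
  destruct (Rle_dec (ln y1) (ln y2)).
  - rewrite Rabs_minus_sym, (Rabs_minus_sym (ln y1)), (Rabs_right (ln y2 - ln y1)) by lra.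
    apply Hphi; [assumption| |]; rewrite exp_ln; lra.
  - rewrite (Rabs_right (ln y1 - ln y2)) by lra.
    apply Hphi; [lra| |]; rewrite exp_ln; lra.
Qed.

Definition interp (p q : vec) (m : nat) : vec := fun i => if Nat.ltb i m then q i else p i.

Lemma ln_I_lipschitz p q j : in_box n pmin pmax p -> in_box n pmin pmax q -> (j < n)%nat ->
  Rabs (ln (I q j) - ln (I p j)) <= rsum n (fun i => B i j * Rabs (ln (p i) - ln (q i))).
Proof.
  intros Hp Hq Hj.
  assert (Hbox : forall m, in_box n pmin pmax (interp p q m)).
  { intros m. destruct Hp as [Hp1 Hp2], Hq as [Hq1 Hq2].
    split; intros i Hi; unfold interp; destruct (Nat.ltb i m); auto. }
  assert (Hstep : forall m, (m < n)%nat ->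
    Rabs (ln (I (interp p q (S m)) j) - ln (I (interp p q m) j))
      <= B m j * Rabs (ln (p m) - ln (q m))).
  { intros m Hm.
    replace (interp p q (S m)) with (upd (interp p q m) m (q m)).
    2:{ apply functional_extensionality. intros i. unfold interp, upd.
        destruct (Nat.eqb_spec i m), (Nat.ltb_spec i (S m)), (Nat.ltb_spec i m);
          subst; auto; lia. }
    replace (interp p q m) with (upd (interp p q m) m (p m)) at 2.
    2:{ apply functional_extensionality. intros i. unfold interp, upd.
        destruct (Nat.eqb_spec i m) as [->|]; auto.
        destruct (Nat.ltb_spec m m); [lia|reflexivity]. }
    rewrite (Rabs_minus_sym (ln (p m))).
    apply ln_I_coord_lipschitz; auto.
    - split; apply Hq; exact Hm.
    - split; apply Hp; exact Hm. }
  assert (Hind : forall m, (m <= n)%nat ->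
    Rabs (ln (I (interp p q m) j) - ln (I p j))
      <= rsum m (fun i => B i j * Rabs (ln (p i) - ln (q i)))).
  { induction m as [|m IH]; intros Hm; simpl.
    - replace (interp p q 0) with p by reflexivity. rewrite Rminus_diag, Rabs_R0. lra.
    - specialize (Hstep m ltac:(lia)). specialize (IH ltac:(lia)).
      eapply Rle_trans; [|apply Rplus_le_compat; [exact IH|exact Hstep]].
      replace (ln (I (interp p q (S m)) j) - ln (I p j)) with
        ((ln (I (interp p q m) j) - ln (I p j)) + (ln (I (interp p q (S m)) j) - ln (I (interp p q m) j)))
        by ring.
      apply Rabs_triang. }
  (* [interp p q n] agrees with [q] only on the first [n] coordinates. *)
  assert (Hend : veq n (interp p q n) q).
  { intros i Hi. unfold interp. destruct (Nat.ltb_spec i n); [reflexivity|lia]. }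
  rewrite <- (I_congr _ _ (Hbox n) Hq Hend j Hj). exact (Hind n (le_n n)).
Qed.


Variables (c s : vec).
Hypothesis HBnn : forall i j, (i < n)%nat -> (j < n)%nat -> 0 <= B i j.
Hypothesis Hc : vlt n (vconst 0) c.
Hypothesis Hs : forall i, (i < n)%nat -> s i - rsum n (fun j => B i j * s j) = c i.
Hypothesis Hsp : vlt n (vconst 0) s.

(* Compare [p] with the fixed point through [max p pstar], which lies above [p], so that
   [p >= I p >= I (max p pstar)]. *)
Lemma ln_feasible_lower_bound pstar p :
  in_box n pmin pmax pstar -> veq n (I pstar) pstar -> feasible n pmin pmax I p ->
  forall j, (j < n)%nat ->
    - rsum n (fun i => B i j * Rmax 0 (ln (p i) - ln (pstar i))) <= ln (p j) - ln (pstar j).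
Proof.
  intros Hbs Hfix [Hbp Hfeas] j Hj.
  assert (Pp := box_pos _ Hbp). assert (Ps := box_pos _ Hbs). unfold vconst in Pp, Ps.
  set (q i := Rmax (p i) (pstar i)).
  assert (Hbq : in_box n pmin pmax q).
  { destruct Hbp as [A1 A2], Hbs as [B1 B2].
    split; intros i Hi; unfold q, Rmax; destruct Rle_dec; auto. }
  assert (HL := ln_I_lipschitz pstar q j Hbs Hbq Hj).
  rewrite (rsum_ext n _ (fun i => B i j * Rmax 0 (ln (p i) - ln (pstar i)))) in HL.
  2:{ intros i Hi. unfold q. rewrite Rabs_minus_sym, ln_Rmax_minus by auto.
      rewrite Rabs_right by (apply Rle_ge, Rmax_l). reflexivity. }
  apply Rabs_le_inv in HL.
  rewrite (Hfix j Hj) in HL.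
  assert (I q j <= p j).
  { eapply Rle_trans; [apply (I_antitone p q Hbp Hbq)|apply Hfeas]; auto.
    intros i Hi. apply Rmax_l. }
  assert (ln (I q j) <= ln (p j)) by (apply ln_le; [apply I_pos|]; assumption).
  lra.
Qed.

Lemma slog_fixed_point_lt pstar p :
  in_box n pmin pmax pstar -> veq n (I pstar) pstar -> feasible n pmin pmax I p ->
  ~ veq n p pstar -> slog n s pstar < slog n s p.
Proof.
  intros Hbs Hfix Hp Hne. apply Rnot_le_lt. intros Hle. apply Hne.
  assert (Pp := box_pos _ (proj1 Hp)). assert (Ps := box_pos _ Hbs). unfold vconst in Pp, Ps.
  set (d i := ln (p i) - ln (pstar i)).
  assert (Hlow := ln_feasible_lower_bound pstar p Hbs Hfix Hp).
  assert (Hsum := rsum_weighted_pospart_le n B c s HBnn Hs Hsp d Hlow).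
  assert (Hd : rsum n (fun i => s i * d i) = slog n s p - slog n s pstar).
  { unfold slog. rewrite <- rsum_minus. apply rsum_ext. intros; unfold d; ring. }
  assert (Hpos0 : forall i, (i < n)%nat -> Rmax 0 (d i) = 0).
  { intros i Hi.
    assert (Hz := rsum_eq0 n (fun i => c i * Rmax 0 (d i))
       ltac:(intros k Hk; apply Rmult_le_pos; [apply Rlt_le, Hc|apply Rmax_l]; exact Hk)
       ltac:(lra) i Hi).
    assert (Hci := Hc i Hi). unfold vconst in Hci.
    destruct (Rmult_integral _ _ Hz); [lra|assumption]. }
  intros i Hi.
  assert (Hdi := Hlow i Hi). fold (d i) in Hdi.
  rewrite (rsum_ext n _ (fun _ => 0)), rsum_0 in Hdi by (intros k Hk; fold (d k); rewrite Hpos0 by exact Hk; ring).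
  assert (Hdi' := Rmax_r 0 (d i)). rewrite Hpos0 in Hdi' by exact Hi.
  apply ln_inv; auto. unfold d in *. lra.
Qed.

Hypothesis Hple : vle n pmin pmax.
Hypothesis Hinv : forall p, in_box n pmin pmax p -> in_box n pmin pmax (I p).

Fixpoint sandwich (k : nat) : vec * vec :=
  match k with
  | O => (pmin, pmax)
  | S k => (I (snd (sandwich k)), I (fst (sandwich k)))
  end.

Definition lo k := fst (sandwich k).
Definition hi k := snd (sandwich k).

Lemma sandwich_in_box k : in_box n pmin pmax (lo k) /\ in_box n pmin pmax (hi k).
Proof.
  induction k as [|k [IHlo IHhi]].
  - split; split; intros i Hi; unfold lo, hi; simpl; try apply Hple; auto; lra.
  - split; apply Hinv; assumption.
Qed.

Lemma sandwich_mono k : vle n (lo k) (lo (S k)) /\ vle n (hi (S k)) (hi k).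
Proof.
  induction k as [|k [IHlo IHhi]].
  - exact (conj (proj1 (Hinv _ (proj2 (sandwich_in_box 0))))
                (proj2 (Hinv _ (proj1 (sandwich_in_box 0))))).
  - split; [apply (I_antitone (hi (S k)) (hi k))|apply (I_antitone (lo k) (lo (S k)))];
      try apply sandwich_in_box; assumption.
Qed.

Lemma lo_le_hi k : vle n (lo k) (hi k).
Proof.
  induction k as [|k IH].
  - exact Hple.
  - apply (I_antitone (lo k) (hi k)); try apply sandwich_in_box; exact IH.
Qed.

Lemma sandwich_pos k i : (i < n)%nat -> 0 < lo k i /\ 0 < hi k i.
Proof.
  intros Hi. destruct (sandwich_in_box k) as [Hlo Hhi].
  exact (conj (box_pos _ Hlo i Hi) (box_pos _ Hhi i Hi)).
Qed.

Lemma sandwich_log_limits : exists LA LB : vec, forall i, (i < n)%nat ->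
  Un_cv (fun k => ln (lo k i)) (LA i) /\ Un_cv (fun k => ln (hi k i)) (LB i).
Proof.
  assert (Hlim : forall i, exists l : R * R, (i < n)%nat ->
            Un_cv (fun k => ln (lo k i)) (fst l) /\ Un_cv (fun k => ln (hi k i)) (snd l)).
  { intros i. destruct (Nat.ltb_spec i n) as [Hi|Hi]; [|exists (0, 0); lia].
    destruct (growing_cv (fun k => ln (lo k i))) as [la Hla].
    { intros k. apply ln_le; [apply sandwich_pos|apply sandwich_mono]; exact Hi. }
    { exists (ln (pmax i)). intros x [k ->].
      apply ln_le; [apply sandwich_pos|apply (sandwich_in_box k)]; exact Hi. }
    destruct (decreasing_cv (fun k => ln (hi k i))) as [lb Hlb].
    { intros k. apply ln_le; [apply sandwich_pos|apply sandwich_mono]; exact Hi. }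
    { exists (- ln (pmin i)). intros x [k ->]. apply Ropp_le_contravar.
      apply ln_le; [apply Hpmin|apply (sandwich_in_box k)]; exact Hi. }
    exists (la, lb). intros _. split; assumption. }
  destruct (choice _ Hlim) as [L HL].
  exists (fun i => fst (L i)), (fun i => snd (L i)). intros i Hi. apply HL, Hi.
Qed.

Section Limits.
Variables LA LB : vec.
Hypothesis HL : forall i, (i < n)%nat ->
  Un_cv (fun k => ln (lo k i)) (LA i) /\ Un_cv (fun k => ln (hi k i)) (LB i).

Lemma ln_lo_le_limit k i : (i < n)%nat -> ln (lo k i) <= LA i.
Proof.
  intros Hi. apply (growing_ineq (fun k => ln (lo k i))); [|apply HL, Hi].
  intros m. apply ln_le; [apply sandwich_pos|apply sandwich_mono]; exact Hi.
Qed.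

Lemma limit_le_ln_hi k i : (i < n)%nat -> LB i <= ln (hi k i).
Proof.
  intros Hi. apply (decreasing_ineq (fun k => ln (hi k i))); [|apply HL, Hi].
  intros m. apply ln_le; [apply sandwich_pos|apply sandwich_mono]; exact Hi.
Qed.

(* The log-gap [LB - LA] is subinvariant for [B]: pass to the limit in
   [ln hi_(k+1) - ln lo_(k+1) = ln I (lo k) - ln I (hi k) <= B^T (ln hi k - ln lo k)]. *)
Lemma limits_log_gap_eq0 i : (i < n)%nat -> LB i - LA i = 0.
Proof.
  revert i. apply (subinvariant_eq0 n B c s Hc Hs Hsp (fun i => LB i - LA i)).
  - intros j Hj. assert (LA j <= LB j); [|lra].
    apply (@Rle_cv_lim (fun k => ln (lo k j)) (fun k => ln (hi k j))); try apply HL; auto.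
    intros k. apply ln_le; [apply sandwich_pos|apply lo_le_hi]; exact Hj.
  - intros j Hj.
    apply (@Rle_cv_lim (fun _ => LB j - LA j)
             (fun k => rsum n (fun i => B i j * (ln (hi k i) - ln (lo k i))))).
    + intros k.
      assert (HLip := ln_I_lipschitz (hi k) (lo k) j (proj2 (sandwich_in_box k))
                        (proj1 (sandwich_in_box k)) Hj).
      apply Rabs_le_inv in HLip.
      rewrite (rsum_ext n _ (fun i => B i j * (ln (hi k i) - ln (lo k i)))) in HLip.
      2:{ intros i Hi. rewrite Rabs_right; [reflexivity|].
          apply Rge_minus, Rle_ge, ln_le; [apply sandwich_pos|apply lo_le_hi]; exact Hi. }
      assert (H1 := limit_le_ln_hi (S k) j Hj). assert (H2 := ln_lo_le_limit (S k) j Hj).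
      change (hi (S k) j) with (I (lo k) j) in H1.
      change (lo (S k) j) with (I (hi k) j) in H2.
      lra.
    + apply Un_cv_const.
    + apply Un_cv_rsum. intros i Hi.
      apply CV_mult; [apply Un_cv_const|apply CV_minus; apply HL, Hi].
Qed.

End Limits.

Lemma exists_fixed_point : exists pstar, in_box n pmin pmax pstar /\ veq n (I pstar) pstar.
Proof.
  destruct sandwich_log_limits as (LA & LB & HL).
  set (pstar i := exp (LA i)).
  assert (Hlo : forall k, vle n (lo k) pstar).
  { intros k i Hi. unfold pstar. rewrite <- (exp_ln (lo k i)) by (apply sandwich_pos, Hi).
    apply exp_le, (ln_lo_le_limit LA LB HL), Hi. }
  assert (Hhi : forall k, vle n pstar (hi k)).
  { intros k i Hi. unfold pstar. rewrite <- (exp_ln (hi k i)) by (apply sandwich_pos, Hi).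
    apply exp_le. assert (Hgap := limits_log_gap_eq0 LA LB HL i Hi).
    assert (Hhi := limit_le_ln_hi LA LB HL k i Hi). lra. }
  assert (Hbs : in_box n pmin pmax pstar) by exact (conj (Hlo O) (Hhi O)).
  assert (HIbounds : forall k, vle n (lo k) (I pstar) /\ vle n (I pstar) (hi k)).
  { intros [|k]; [exact (Hinv _ Hbs)|].
    split; [apply (I_antitone pstar (hi k))|apply (I_antitone (lo k) pstar)];
      try apply sandwich_in_box; auto. }
  exists pstar. split; [exact Hbs|]. intros j Hj.
  assert (HIp := I_pos _ j Hbs Hj).
  assert (LA j <= ln (I pstar j)).
  { apply (@Rle_cv_lim (fun k => ln (lo k j)) (fun _ => ln (I pstar j)));
      [|apply HL, Hj|apply Un_cv_const].
    intros k. apply ln_le; [apply sandwich_pos, Hj|apply HIbounds, Hj]. }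
  assert (ln (I pstar j) <= LB j).
  { apply (@Rle_cv_lim (fun _ => ln (I pstar j)) (fun k => ln (hi k j)));
      [|apply Un_cv_const|apply HL, Hj].
    intros k. apply ln_le; [exact HIp|apply HIbounds, Hj]. }
  assert (Hgap := limits_log_gap_eq0 LA LB HL j Hj).
  rewrite <- (exp_ln (I pstar j)) by exact HIp.
  change (pstar j) with (exp (LA j)). f_equal. lra.
Qed.

Lemma fixed_point_unique pstar :
  in_box n pmin pmax pstar -> veq n (I pstar) pstar ->
  forall q, in_box n pmin pmax q -> veq n (I q) q -> veq n q pstar.
Proof.
  intros Hbs Hfix q Hbq Hfq. apply NNPP. intros Hne.
  assert (Hfeas : forall p, in_box n pmin pmax p -> veq n (I p) p -> feasible n pmin pmax I p)
    by (intros p Hp Hf; split; [exact Hp|intros i Hi; rewrite Hf by exact Hi; lra]).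
  assert (slog n s pstar < slog n s q) by (apply slog_fixed_point_lt; auto).
  assert (slog n s q < slog n s pstar).
  { apply slog_fixed_point_lt; auto. intros Heq. apply Hne. intros i Hi. symmetry. auto. }
  lra.
Qed.

Variables (m : nat) (h : R -> vec).
Hypothesis Hm : (0 < m)%nat.
Hypothesis Hh_incr : forall k x y, (k < m)%nat -> 0 < x -> x < y -> h x k < h y k.

Lemma pareto_optimal_iff_fixed_point pstar :
  in_box n pmin pmax pstar -> veq n (I pstar) pstar ->
  forall q, pareto_optimal n m pmin pmax I (fun p => h (rprod n (fun i => Rpower (p i) (s i)))) q
            <-> veq n q pstar.
Proof.
  intros Hbs Hfix q.
  assert (Hkappa : forall p, in_box n pmin pmax p ->
            rprod n (fun i => Rpower (p i) (s i)) = exp (slog n s p))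
    by (intros p Hp; apply rprod_Rpower, box_pos, Hp).
  assert (Hfs : feasible n pmin pmax I pstar)
    by (split; [exact Hbs|intros i Hi; rewrite Hfix by exact Hi; lra]).
  assert (Hh_lt : forall p p', in_box n pmin pmax p -> in_box n pmin pmax p' ->
            slog n s p < slog n s p' -> forall k, (k < m)%nat ->
            h (rprod n (fun i => Rpower (p i) (s i))) k < h (rprod n (fun i => Rpower (p' i) (s i))) k).
  { intros p p' Hp Hp' Hlt k Hk. rewrite !Hkappa by assumption.
    apply Hh_incr; [exact Hk|apply exp_pos|apply exp_increasing, Hlt]. }
  split.
  - intros [[Hbq Hfq] Hopt]. apply NNPP. intros Hne. apply Hopt. exists pstar.
    assert (Hlt := slog_fixed_point_lt pstar q Hbs Hfix (conj Hbq Hfq) Hne).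
    split; [exact Hfs|split].
    + intros k Hk. apply Rlt_le, Hh_lt; assumption.
    + intros Heq. specialize (Hh_lt _ _ Hbs Hbq Hlt 0%nat Hm). rewrite Heq in Hh_lt by exact Hm. lra.
  - intros Hq.
    assert (Hbq : in_box n pmin pmax q).
    { destruct Hbs as [Hlo Hhi]. split; intros i Hi; rewrite Hq by exact Hi; auto. }
    assert (Hslog : forall p, veq n p pstar -> slog n s p = slog n s pstar)
      by (intros p Hp; apply rsum_ext; intros i Hi; rewrite Hp by exact Hi; reflexivity).
    split.
    + split; [exact Hbq|]. intros j Hj.
      rewrite (I_congr q pstar Hbq Hbs Hq j Hj), Hfix, Hq by exact Hj. lra.
    + intros (q' & [Hbq' Hfq'] & Hle & Hneq).
      destruct (classic (veq n q' pstar)) as [Hq'|Hq'].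
      * apply Hneq. intros k Hk. rewrite !Hkappa, (Hslog q' Hq'), (Hslog q Hq) by assumption.
        reflexivity.
      * assert (Hlt := slog_fixed_point_lt pstar q' Hbs Hfix (conj Hbq' Hfq') Hq').
        rewrite <- (Hslog q Hq) in Hlt.
        specialize (Hle 0%nat Hm). specialize (Hh_lt _ _ Hbq Hbq' Hlt 0%nat Hm). lra.
Qed.

End Box.

Theorem mainTheorem4
  (n m : nat) (pmin pmax : vec) (I : vec -> vec) (B : mat) (c s : vec)
  (h : R -> vec)
  (Hm : (0 < m)%nat)
  (Hpmin : vlt n (vconst 0) pmin) (Hple : vle n pmin pmax)
  (HI : type_II_standard n I)
  (Hdiff : forall p, vlt n (vconst 0) p -> frechet_diff_at n I p)
  (Hinv : forall p, in_box n pmin pmax p -> in_box n pmin pmax (I p))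
  (HBub : forall i j, (i < n)%nat -> (j < n)%nat ->
     forall p l, in_box n pmin pmax p -> partial_deriv I j i p l ->
       Rabs (l * p i / I p j) <= B i j)
  (HBatt : forall i j, (i < n)%nat -> (j < n)%nat ->
     exists p l, in_box n pmin pmax p /\ partial_deriv I j i p l /\
       Rabs (l * p i / I p j) = B i j)
  (Hrho : spectral_radius_lt_1 n B)
  (Hc : vlt n (vconst 0) c)
  (Hh_der : forall k x, (k < m)%nat -> 0 < x ->
     exists d, 0 < d /\ derivable_pt_lim (fun t => h t k) x d)
  (Hh_incr : forall k x y, (k < m)%nat -> 0 < x -> x < y -> h x k < h y k)
  (Hs : forall i, (i < n)%nat -> s i - rsum n (fun j => B i j * s j) = c i)
  (Hfeas : exists p, feasible n pmin pmax I p) :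
  let kappa := fun p : vec => h (rprod n (fun i => Rpower (p i) (s i))) in
  exists pstar,
    in_box n pmin pmax pstar /\ veq n (I pstar) pstar /\
    (forall q, in_box n pmin pmax q -> veq n (I q) q -> veq n q pstar) /\
    (forall q, pareto_optimal n m pmin pmax I kappa q <-> veq n q pstar).
Proof.
  intros kappa.
  assert (HBnn : forall i j, (i < n)%nat -> (j < n)%nat -> 0 <= B i j).
  { intros i j Hi Hj. destruct (HBatt i j Hi Hj) as (p & l & _ & _ & <-). apply Rabs_pos. }
  assert (Hsp : vlt n (vconst 0) s)
    by exact (nonneg_resolvent_pos n B c s (spectral_radius_lt_1_nonsingular n B Hrho) HBnn Hc Hs).
  destruct (exists_fixed_point n pmin pmax I Hpmin HI B Hdiff HBub c s Hc Hs Hsp Hple Hinv)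
    as (pstar & Hbs & Hfix).
  exists pstar. split; [exact Hbs|split; [exact Hfix|split]].
  - exact (fixed_point_unique n pmin pmax I Hpmin HI B Hdiff HBub c s HBnn Hc Hs Hsp pstar Hbs Hfix).
  - exact (pareto_optimal_iff_fixed_point n pmin pmax I Hpmin HI B Hdiff HBub c s HBnn Hc Hs Hsp
             m h Hm Hh_incr pstar Hbs Hfix).
Qed.
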